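(* Let $D=(V,A)$ be a digraph with minimum in-degree at least 1, and let $\mathcal{L}D=\mathcal{L}_{(A',\phi)}D$ be a partial line digraph of $D$. Then the number of semikernels of $D$ is less than or equal to the number of semikernels of $\mathcal{L}D$; more precisely, the map $K\mapsto\omega^-(K)\cap A'$ sends semikernels of $D$ injectively to semikernels of $\mathcal{L}D$.
   Context: Digraphs are loopless and without multiple arcs. For $U\subseteq V$, $\omega^-(U)=\{(x,y)\in A: y\in U,\ x\notin U\}$ and $\omega^+(U)=\{(x,y)\in A: x\in U,\ y\notin U\}$; for a vertex $j$, $\omega^-(j)$ is the set of arcs with terminal vertex $j$. For a set of arcs $\Omega$, $H(\Omega)=\{y:(x,y)\in\Omega\}$. The arc $(x,y)$ is also written $xy$. Partial line digraph: given $D=(V,A)$ with minimum in-degree at least 1, take an arc subset $A'\subseteq A$ and a surjective map $\phi:A\to A'$ such that (i) $H(A')=V$; (ii) $\phi$ restricted to $A'$ is the identity, and for every vertex $j\in V$, $\phi(\omega^-(j))\subseteq\omega^-(j)\cap A'$. The partial line digraph $\mathcal{L}_{(A',\phi)}D$ has vertex set $A'$ and arc set $\{(ij,\phi(j,k)) : ij\in A',\ (j,k)\in A\}$. A semikernel of a digraph is an independent vertex set $S$ (no arc joins two vertices of $S$) such that for every arc $(s,x)\in\omega^+(S)$ there is an arc $(x,s')\in\omega^-(S)$. *)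

From mathcomp Require Import all_boot.
Set Implicit Arguments. Unset Strict Implicit. Unset Printing Implicit Defensive.

(* A digraph on a finite vertex type T is given by its arc relation E : rel T;
   arcs are pairs (x,y) with E x y. A digraph may be restricted to a vertex set W. *)

Definition independent (T : finType) (E : rel T) (S : {set T}) : bool :=
  [forall x in S, forall y in S, ~~ E x y].

Definition semikernel (T : finType) (W : {set T}) (E : rel T) (S : {set T}) : bool :=
  [&& S \subset W, independent E S &
      [forall s in S, forall x in W :\: S, E s x ==> [exists s' in S, E x s']]].

Definition arcs (V : finType) (E : rel V) : {set V * V} := [set a | E a.1 a.2].

(* (A', phi) defines a partial line digraph of D = (V, E). phi is given as a
   function on V*V; only its values on arcs matter. *)
Definition is_pld (V : finType) (E : rel V) (A' : {set V * V})
    (phi : V * V -> V * V) : Prop :=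
  (A' \subset arcs E) /\
      (* H(A') = V *)
      (forall y : V, exists a, (a \in A') /\ a.2 = y) /\
      (forall a, a \in A' -> exists b, (b \in arcs E) /\ phi b = a) /\
      (forall a, a \in arcs E -> phi a \in A') /\
      (forall a, a \in A' -> phi a = a) /\
      (* phi(omega^-(j)) subset omega^-(j) cap A' *)
      (forall a, a \in arcs E -> (phi a).2 = a.2).

(* Arc relation of the partial line digraph L_(A',phi) D, whose vertex set is A':
   (ij, phi(j,k)) for ij in A' and (j,k) in A. *)
Definition pld_rel (V : finType) (E : rel V) (A' : {set V * V})
    (phi : V * V -> V * V) : rel (V * V) :=
  fun a b => (a \in A') && [exists k : V, E a.2 k && (phi (a.2, k) == b)].

Definition in_arcs_A' (V : finType) (E : rel V) (A' : {set V * V}) (K : {set V})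
  : {set V * V} :=
  [set a in A' | E a.1 a.2 && (a.2 \in K) && (a.1 \notin K)].

From mathcomp Require Import all_boot.

(* For an independent set K, an arc of A' lies in omega^-(K) exactly when its
   head is in K, and every vertex is the head of some arc of A'; hence
   K |-> omega^-(K) cap A' is injective.  An arc (a, phi(a.2, k)) of the partial
   line digraph projects to the arc (a.2, k) of D, which transports independence
   and absorption from K to its image. *)

Set Implicit Arguments.
Unset Strict Implicit.
Unset Printing Implicit Defensive.

Lemma independent_noarc (T : finType) (E : rel T) (S : {set T}) x y :
  independent E S -> x \in S -> y \in S -> ~~ E x y.
Proof. by move=> /forallP/(_ x)/implyP Hx xS yS; move: (Hx xS) => /forall_inP; apply. Qed.

Lemma semikernel_independent (T : finType) (W : {set T}) (E : rel T) (S : {set T}) :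
  semikernel W E S -> independent E S.
Proof. by case/and3P. Qed.

Lemma semikernel_absorb (T : finType) (W : {set T}) (E : rel T) (S : {set T}) s x :
  semikernel W E S -> s \in S -> x \in W -> x \notin S -> E s x ->
  exists2 s', s' \in S & E x s'.
Proof.
case/and3P=> _ _ /forall_inP/(_ s) Habs sS xW xS Esx.
have xWS : x \in W :\: S by rewrite inE xS xW.
have /exists_inP[s' s'S Exs'] := implyP (forall_inP (Habs sS) x xWS) Esx.
by exists s'.
Qed.

Section PartialLineDigraph.

Variables (V : finType) (E : rel V) (A' : {set V * V}) (phi : V * V -> V * V).

Hypothesis A'_arcs : A' \subset arcs E.
Hypothesis A'_heads : forall y : V, exists a, a \in A' /\ a.2 = y.
Hypothesis phi_in_A' : forall a, a \in arcs E -> phi a \in A'.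
Hypothesis phi_head : forall a, a \in arcs E -> (phi a).2 = a.2.

Local Notation LE := (pld_rel E A' phi).

Lemma A'_arc a : a \in A' -> E a.1 a.2.
Proof. by move/(subsetP A'_arcs); rewrite inE. Qed.

Lemma pld_rel_head a b : LE a b -> E a.2 b.2.
Proof.
case/andP=> _ /existsP[k /andP[Ek /eqP <-]].
by rewrite phi_head ?inE.
Qed.

Lemma pld_rel_phi a k : a \in A' -> E a.2 k -> LE a (phi (a.2, k)).
Proof. by move=> aA Ek; rewrite /pld_rel aA; apply/existsP; exists k; rewrite Ek /=. Qed.

Lemma in_arcs_A'E (K : {set V}) a :
  independent E K -> (a \in in_arcs_A' E A' K) = (a \in A') && (a.2 \in K).
Proof.
move=> indK; rewrite inE; case aA: (a \in A') => //=.
case a2K: (a.2 \in K); rewrite ?andbF //= A'_arc //=.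
by apply: contraL (A'_arc aA) => a1K; exact: independent_noarc a1K a2K.
Qed.

Lemma semikernel_in_arcs_A' (K : {set V}) :
  semikernel setT E K -> semikernel A' LE (in_arcs_A' E A' K).
Proof.
move=> semK; have indK := semikernel_independent semK.
apply/and3P; split.
- by apply/subsetP => a; rewrite in_arcs_A'E // => /andP[].
- apply/forall_inP => a; rewrite in_arcs_A'E // => /andP[_ a2K].
  apply/forall_inP => b; rewrite in_arcs_A'E // => /andP[_ b2K].
  exact: contra (@pld_rel_head a b) (independent_noarc indK a2K b2K).
- apply/forall_inP => s; rewrite in_arcs_A'E // => /andP[_ s2K].
  apply/forall_inP => x /setDP[xA]; rewrite in_arcs_A'E // xA /= => x2K.
  apply/implyP => /pld_rel_head Esx.
  have [s' s'K Exs'] := semikernel_absorb semK s2K (in_setT _) x2K Esx.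
  have xs'_arc : (x.2, s') \in arcs E by rewrite inE.
  apply/exists_inP; exists (phi (x.2, s')); last exact: pld_rel_phi.
  by rewrite in_arcs_A'E // phi_in_A' // phi_head.
Qed.

Lemma in_arcs_A'_inj : {in [pred K : {set V} | semikernel setT E K] &,
                         injective (in_arcs_A' E A')}.
Proof.
move=> K1 K2; rewrite !inE => /semikernel_independent ind1
  /semikernel_independent ind2 eqK; apply/setP => y.
have [a [aA <-]] := A'_heads y.
by have := in_arcs_A'E a ind1; rewrite eqK in_arcs_A'E // aA.
Qed.

End PartialLineDigraph.

Theorem theorem2p6 (V : finType) (E : rel V) (A' : {set V * V})
    (phi : V * V -> V * V)
    (Hloopless : irreflexive E)
    (Hindeg : forall y : V, exists x : V, E x y)
    (Hpld : is_pld E A' phi) :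
  (forall K : {set V}, semikernel setT E K ->
      semikernel A' (pld_rel E A' phi) (in_arcs_A' E A' K)) /\
  {in [pred K : {set V} | semikernel setT E K] &, injective (in_arcs_A' E A')} /\
  #|[set K : {set V} | semikernel setT E K]|
    <= #|[set S : {set V * V} | semikernel A' (pld_rel E A' phi) S]|.
Proof.
case: Hpld => A'_arcs [A'_heads [_ [phi_in_A' [_ phi_head]]]].
have semK := semikernel_in_arcs_A' A'_arcs phi_in_A' phi_head.
have inj := in_arcs_A'_inj A'_arcs A'_heads.
split=> //; split=> //.
rewrite -(card_in_imset (f := in_arcs_A' E A')); last first.
  by move=> K1 K2; rewrite !inE; exact: inj.
apply/subset_leq_card/subsetP => S /imsetP[K]; rewrite !inE => semK_K ->.
exact: semK.
Qed.
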